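(* Let $(X,d)$ be a proper metric space and let $X+_fW$ be a Hausdorff compactification of $X$ with the coarse Karlsson property. Then $X+_fW\in\mathrm{Pers}(\varepsilon_d)$, i.e. every $e\in\varepsilon_d$ is perspective for $X+_fW$.
   Context: $X+_fW$ denotes $X\sqcup W$ with closed sets the $D$ such that $D\cap X$ is closed in $X$, $D\cap W$ closed in $W$ and $f(D\cap X)\subseteq D$, for an admissible $f$ (sending $\emptyset$ to $\emptyset$ and preserving finite unions) from closed sets of $X$ to closed sets of $W$; here it is compact Hausdorff with $X$ dense. $\mathfrak{U}_f$ is the unique uniform structure of $X+_fW$; a set $S$ is $u$-small if $S\times S\subseteq u$. $\varepsilon_d$ is the bounded coarse structure: all $e\subseteq X\times X$ with $\sup\{d(x,y):(x,y)\in e\}<\infty$. A set $e\subseteq X\times X$ is perspective if $\mathrm{Cl}_{(X+_fW)^2}(e)\cap((X+_fW)^2-X^2)\subseteq\{(p,p):p\in W\}$; $\mathrm{Pers}(\varepsilon_d)$ consists of Hausdorff compactifications for which every element of $\varepsilon_d$ is perspective. A coarse arc between $x,y\in X$ is a map $\lambda:[0,t]\to X$ which is a coarse embedding for the metric coarse structures, with $\lambda(0)=x$, $\lambda(t)=y$. A set $\Upsilon$ of coarse arcs is equicoarse if (1) for every $r>0$ there is $s>0$ with $d(\lambda(a),\lambda(b))<s$ whenever $\lambda\in\Upsilon$, $a,b\in\mathrm{dom}\,\lambda$, $|a-b|<r$; and (2) for every $r>0$ there is $s>0$ with $|a-b|<s$ whenever $\lambda\in\Upsilon$ and $d(\lambda(a),\lambda(b))<r$.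 $X+_fW$ has the coarse Karlsson property if there is an equicoarse set $\Upsilon$ containing, for all $x,y\in X$, a coarse arc between $x$ and $y$, such that for every $u\in\mathfrak{U}_f$ there is a bounded $S\subseteq X$ such that every arc in $\Upsilon$ whose image does not meet $S$ has $u$-small image. *)

From HB Require Import structures.
From mathcomp Require Import all_boot all_order all_algebra.
From mathcomp Require Import all_classical reals topology.
Set Implicit Arguments. Unset Strict Implicit. Unset Printing Implicit Defensive.
Import Order.TTheory GRing.Theory Num.Theory.
Local Open Scope ring_scope.
Local Open Scope classical_set_scope.

Definition is_metric (R : realType) (X : Type) (d : X -> X -> R) : Prop :=
  (forall x y, 0 <= d x y) /\ (forall x y, d x y = 0 <-> x = y) /\
  (forall x y, d x y = d y x) /\ (forall x y z, d x z <= d x y + d y z).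

Definition mclosed (R : realType) (X : Type) (d : X -> X -> R) (D : set X) : Prop :=
  forall x, (forall r : R, 0 < r -> exists y, D y /\ d x y < r) -> D x.

Definition mopen (R : realType) (X : Type) (d : X -> X -> R) (U : set X) : Prop :=
  mclosed d (~` U).

Definition mbounded (R : realType) (X : Type) (d : X -> X -> R) (S : set X) : Prop :=
  exists x0 (r : R), forall y, S y -> d x0 y <= r.

Definition cover_compact (T : Type) (isopen : set T -> Prop) (A : set T) : Prop :=
  forall (I : eqType) (U : I -> set T), (forall i, isopen (U i)) ->
    (forall a, A a -> exists i, U i a) ->
    exists s : seq I, forall a, A a -> exists i, i \in s /\ U i a.

Definition proper_metric (R : realType) (X : Type) (d : X -> X -> R) : Prop :=
  is_metric d /\
  forall S, mclosed d S -> mbounded d S -> cover_compact (mopen d) S.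

Definition admissible (R : realType) (X : Type) (d : X -> X -> R)
  (W : topologicalType) (f : set X -> set W) : Prop :=
  (forall A, mclosed d A -> closed (f A)) /\ f set0 = set0 /\
  (forall A B, mclosed d A -> mclosed d B -> f (A `|` B) = f A `|` f B).

(* closed sets of X +_f W, a topology on the disjoint union X + W *)
Definition sclosed (R : realType) (X : Type) (d : X -> X -> R)
  (W : topologicalType) (f : set X -> set W) (D : set (X + W)) : Prop :=
  mclosed d [set x | D (inl x)] /\ closed [set w | D (inr w)] /\
  f [set x | D (inl x)] `<=` [set w | D (inr w)].

Definition sopen (R : realType) (X : Type) (d : X -> X -> R)
  (W : topologicalType) (f : set X -> set W) (U : set (X + W)) : Prop :=
  sclosed d f (~` U).

Definition hausdorff_compactification (R : realType) (X : Type) (d : X -> X -> R)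
  (W : topologicalType) (f : set X -> set W) : Prop :=
  cover_compact (sopen d f) setT /\
  (forall p q : X + W, p <> q -> exists U V, sopen d f U /\ sopen d f V /\
      U p /\ V q /\ U `&` V = set0) /\
  (forall U, sopen d f U -> (exists p, U p) -> exists x, U (inl x)).

(* the unique uniform structure U_f of the compact Hausdorff space X +_f W:
   the neighbourhoods of the diagonal in (X +_f W)^2 *)
Definition unif_f (R : realType) (X : Type) (d : X -> X -> R)
  (W : topologicalType) (f : set X -> set W) (u : set ((X + W) * (X + W))) : Prop :=
  forall p, exists U V, sopen d f U /\ sopen d f V /\ U p /\ V p /\
    (forall a b, U a -> V b -> u (a, b)).

Definition usmall (X W : Type) (u : set ((X + W) * (X + W))) (S : set X) : Prop :=
  forall a b, S a -> S b -> u (inl a, inl b).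

Definition eps_d (R : realType) (X : Type) (d : X -> X -> R) (e : set (X * X)) : Prop :=
  exists M : R, forall x y, e (x, y) -> d x y <= M.

(* closure of e ⊆ X^2 in (X +_f W)^2 (product topology) *)
Definition closure2 (R : realType) (X : Type) (d : X -> X -> R)
  (W : topologicalType) (f : set X -> set W) (e : set (X * X))
  (pq : (X + W) * (X + W)) : Prop :=
  forall U V, sopen d f U -> sopen d f V -> U pq.1 -> V pq.2 ->
    exists x y, e (x, y) /\ U (inl x) /\ V (inl y).

Definition is_inl (X W : Type) (p : X + W) : Prop := exists x, p = inl x.

Definition perspective (R : realType) (X : Type) (d : X -> X -> R)
  (W : topologicalType) (f : set X -> set W) (e : set (X * X)) : Prop :=
  forall p q, closure2 d f e (p, q) -> ~ (is_inl p /\ is_inl q) ->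
    exists w, p = inr w /\ q = inr w.

(* an arc is a pair (t, lam), lam considered on the domain [0, t] *)
Definition arc (R : realType) (X : Type) := (R * (R -> X))%type.

Definition in_dom (R : realType) (X : Type) (g : arc R X) (a : R) : Prop :=
  0 <= a <= g.1.

(* coarse embedding [0,t] -> X for the metric coarse structures, from x to y *)
Definition coarse_arc (R : realType) (X : Type) (d : X -> X -> R) (x y : X)
  (g : arc R X) : Prop :=
  0 <= g.1 /\ g.2 0 = x /\ g.2 g.1 = y /\
  (forall r : R, 0 < r -> exists s : R, forall a b, in_dom g a -> in_dom g b ->
     `|a - b| < r -> d (g.2 a) (g.2 b) < s) /\
  (forall r : R, 0 < r -> exists s : R, forall a b, in_dom g a -> in_dom g b ->
     d (g.2 a) (g.2 b) < r -> `|a - b| < s).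

Definition arc_image (R : realType) (X : Type) (g : arc R X) : set X :=
  [set z | exists a, in_dom g a /\ g.2 a = z].

Definition equicoarse (R : realType) (X : Type) (d : X -> X -> R)
  (Ups : set (arc R X)) : Prop :=
  (forall r : R, 0 < r -> exists s : R, forall g a b, Ups g -> in_dom g a -> in_dom g b ->
     `|a - b| < r -> d (g.2 a) (g.2 b) < s) /\
  (forall r : R, 0 < r -> exists s : R, forall g a b, Ups g -> in_dom g a -> in_dom g b ->
     d (g.2 a) (g.2 b) < r -> `|a - b| < s).

Definition coarse_Karlsson (R : realType) (X : Type) (d : X -> X -> R)
  (W : topologicalType) (f : set X -> set W) : Prop :=
  exists Ups : set (arc R X),
    (forall g, Ups g -> exists x y, coarse_arc d x y g) /\
    equicoarse d Ups /\
    (forall x y, exists g, Ups g /\ coarse_arc d x y g) /\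
    (forall u, unif_f d f u -> exists S, mbounded d S /\
       forall g, Ups g -> arc_image g `&` S = set0 -> usmall u (arc_image g)).

From Pilot Require Import Defs.
From mathcomp Require Import all_boot all_order all_algebra.
From mathcomp Require Import all_classical reals topology.
From mathcomp Require Import lra.
Set Implicit Arguments. Unset Strict Implicit.
Unset Printing Implicit Defensive.
Import Order.TTheory GRing.Theory Num.Theory.
Local Open Scope ring_scope.
Local Open Scope classical_set_scope.

(* Suppose [(p, inr w)] lies in the closure of a bounded [e] with [p <> inr w].
   By compactness and the Hausdorff property there are open [U] around [p] and
   [Q] around [inr w] such that the complement [u] of [U `*` Q] is an entourage.
   The coarse Karlsson property yields a bounded [S] outside of which arcs are
   [u]-small.  Since closed balls of the proper space [X] are compact in
   [X +_f W], [Q] may be shrunk to avoid any given ball, so [e] has a pair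
   [(x, y)] with [x] in [U] and [y] in [Q] arbitrarily far out.  As [d x y] is
   bounded, equicoarseness keeps the arc from [x] to [y] close to [y], hence
   away from [S]; so the arc is [u]-small, contradicting [x \in U], [y \in Q].
   Closure points of the form [(inr w, p)] are handled by transposing [e]. *)

Section SumTopology.
Variables (R : realType) (X : Type) (d : X -> X -> R)
  (W : topologicalType) (f : set X -> set W).

Lemma mclosedU (A B : set X) : mclosed d A -> mclosed d B -> mclosed d (A `|` B).
Proof.
move=> clA clB x x_adh; apply: contrapT => /not_orP [nAx nBx].
have [rA /not_implyP [rA0 farA]] := (existsNP _).2 (contra_not (clA x) nAx).
have [rB /not_implyP [rB0 farB]] := (existsNP _).2 (contra_not (clB x) nBx).
have [|y [AUBy]] := x_adh (Num.min rA rB); first by rewrite lt_min rA0.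
rewrite lt_min => /andP [dA dB].
by case: AUBy => [Ay|By]; [apply: farA | apply: farB]; exists y.
Qed.

Lemma mclosed_closed_ball (x0 : X) (r : R) :
  is_metric d -> mclosed d [set y | d x0 y <= r].
Proof.
move=> [_ [_ [dC dT]]] y y_adh /=; apply/ler_addgt0Pr => eps eps0.
have [z [/= dx0z dzy]] := y_adh eps eps0.
have := dT x0 z y; rewrite (dC z y); lra.
Qed.

Hypothesis fadm : admissible d f.

Local Notation scompact := (Defs.cover_compact (sopen d f)).

Lemma admissible_subset (A B : set X) : mclosed d A -> mclosed d B ->
  A `<=` B -> f A `<=` f B.
Proof.
move=> clA clB /setUidPr AB; rewrite -AB fadm.2.2 //; exact: subsetUl.
Qed.

Lemma sopen_set0 : sopen d f set0.
Proof.
rewrite /sopen setC0; split; first by move=> x _.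
by split; [exact: closedT | move=> w].
Qed.

Lemma sopen_setT : sopen d f setT.
Proof.
rewrite /sopen setCT; split; first by move=> x /(_ 1 ltr01) [y []].
by split; [exact: closed0 | rewrite fadm.2.1].
Qed.

Lemma sopen_setI (U V : set (X + W)) :
  sopen d f U -> sopen d f V -> sopen d f (U `&` V).
Proof.
move=> [clU [clU' fU]] [clV [clV' fV]].
have split_setC (Y : Type) (g : Y -> X + W) :
    [set y | (~` (U `&` V)) (g y)] = [set y | (~` U) (g y)] `|` [set y | (~` V) (g y)].
  by apply/seteqP; split => y /=; [move/not_andP | move=> + []; case].
rewrite /sopen /sclosed !split_setC fadm.2.2 //.
split; first exact: mclosedU.
split; first exact: closedU.
exact: setUSS.
Qed.

Lemma sopen_bigcup (I : Type) (P : set I) (U : I -> set (X + W)) :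
  (forall i, P i -> sopen d f (U i)) -> sopen d f (\bigcup_(i in P) U i).
Proof.
move=> oU.
have clX : mclosed d [set x | (~` \bigcup_(i in P) U i) (inl x)].
  move=> x x_adh [i Pi Uix]; apply: (oU i Pi).1 Uix => r r0.
  have [y [nUy dxy]] := x_adh r r0.
  by exists y; split => // Uiy; apply: nUy; exists i.
split => //; split.
  rewrite setC_bigcup.
  by apply: closed_bigI => i Pi; exact: (oU i Pi).2.1.
move=> w fw [i Pi Uiw]; apply: (oU i Pi).2.2 _ Uiw.
apply: admissible_subset fw => //; first exact: (oU i Pi).1.
by move=> x /= nUx Uix; apply: nUx; exists i.
Qed.

Lemma sopen_bigcap_seq (I : eqType) (s : seq I) (U : I -> set (X + W)) :
  (forall i, sopen d f (U i)) -> sopen d f (\bigcap_(i in [set i | i \in s]) U i).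
Proof.
move=> oU; elim: s => [|i s IH].
  have -> : [set i | i \in [::]] = set0 :> set I by apply/seteqP; split.
  by rewrite bigcap_set0; exact: sopen_setT.
have -> : \bigcap_(j in [set j | j \in i :: s]) U j =
    U i `&` \bigcap_(j in [set j | j \in s]) U j.
  apply/seteqP; split => z /=.
    by move=> Uz; split => [|j js]; apply: Uz; rewrite /= inE ?eqxx ?js ?orbT.
  by move=> [Uiz Uz] j; rewrite /= inE => /orP [/eqP -> | /Uz].
exact: sopen_setI (oU i) IH.
Qed.

Lemma scompact_setC (V : set (X + W)) : scompact setT -> sopen d f V -> scompact (~` V).
Proof.
move=> cpt oV I U oU cov.
pose U' (o : option I) := if o is Some i then U i else V.
have oU' o : sopen d f (U' o) by case: o.
have covU' a : setT a -> exists o, U' o a.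
  move=> _; have [Va|nVa] := pselect (V a); first by exists None.
  by have [i Uia] := cov a nVa; exists (Some i).
have [s cov'] := cpt _ U' oU' covU'.
exists (pmap id s) => a nVa.
have [[i|] [si Ua]] := cov' a Logic.I; last by [].
by exists i; rewrite mem_pmap map_id.
Qed.

Lemma scompact_image_inl (N : set X) :
  Defs.cover_compact (mopen d) N -> scompact (inl @` N).
Proof.
move=> cptN I U oU cov.
have [s covN] := cptN I (fun i => [set x | U i (inl x)]) (fun i => (oU i).1)
  (fun x Nx => cov (inl x) (ex_intro2 _ _ x Nx erefl)).
exists s => _ [x Nx <-]; exact: covN.
Qed.

Hypothesis sep_points : forall p q : X + W, p <> q -> exists U V,
  sopen d f U /\ sopen d f V /\ U p /\ V q /\ U `&` V = set0.

Lemma scompact_separation (K : set (X + W)) (q : X + W) : scompact K -> ~ K q ->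
  exists A Q, [/\ sopen d f A, sopen d f Q, K `<=` A, Q q & A `&` Q = set0].
Proof.
move=> cptK nKq.
have nbhd (r : X + W) : exists AQ : set (X + W) * set (X + W),
    [/\ sopen d f AQ.1, sopen d f AQ.2, AQ.2 q, AQ.1 `&` AQ.2 = set0 & K r -> AQ.1 r].
  have [Kr|nKr] := pselect (K r); last first.
    by exists (set0, setT); split=> //; [exact: sopen_set0 | exact: sopen_setT | exact: set0I].
  have [|A [Q [oA [oQ [Ar [Qq AQ0]]]]]] := sep_points (p := r) (q := q).
    by move=> rq; apply: nKq; rewrite -rq.
  by exists (A, Q).
have [g /all_and5 [oA oQ Qq AQ0 KA]] := choice nbhd.
have [s covK] := cptK {classic (X + W)} (fun r => (g r).1) oA
  (fun a Ka => ex_intro (fun i => (g i).1 a) a (KA a Ka)).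
exists (\bigcup_(i in [set i | i \in s]) (g i).1),
       (\bigcap_(i in [set i | i \in s]) (g i).2).
split; first exact: sopen_bigcup.
- exact: sopen_bigcap_seq.
- by move=> a /covK [i [si gia]]; exists i.
- by move=> i _; exact: Qq.
apply/disjoints_subset => z [i si Az] Qz.
by move/disjoints_subset: (AQ0 i) => /(_ z Az); apply; exact: Qz.
Qed.

Lemma inr_separated_from_ball (w : W) (x0 : X) (r : R) : proper_metric d ->
  exists Q, [/\ sopen d f Q, Q (inr w) & forall y, Q (inl y) -> r < d x0 y].
Proof.
move=> [dmetric dproper].
have bddN : mbounded d [set y | d x0 y <= r] by exists x0, r.
have cptN := dproper _ (mclosed_closed_ball dmetric) bddN.
have [|A [Q [_ oQ NA Qw /disjoints_subset AQ0]]] :=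
  scompact_separation (scompact_image_inl cptN) (q := inr w); first by case.
exists Q; split=> // y Qy; rewrite ltNge; apply/negP => Ny.
exact: AQ0 (NA _ (ex_intro2 _ _ y Ny erefl)) Qy.
Qed.

Hypothesis scompactT : scompact setT.

(* [Q] is taken disjoint from an open [A] containing the compact set [~` V];
   the squares [V `*` V] and [A `*` A] then cover the diagonal inside [u]. *)
Lemma separating_entourage (p q : X + W) : p <> q -> exists U Q,
  [/\ sopen d f U, sopen d f Q, U p, Q q & unif_f d f [set ab | ~ (U ab.1 /\ Q ab.2)]].
Proof.
move=> pq.
have [U [V [oU [oV [Up [Vq /disjoints_subset UV0]]]]]] := sep_points pq.
have [A [Q [oA oQ VcA Qq /disjoints_subset AQ0]]] :=
  scompact_separation (scompact_setC scompactT oV) (fun nVq => nVq Vq).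
exists U, Q; split=> // r.
have [Vr|/VcA Ar] := pselect (V r).
  exists V, V; do 4!split=> //.
  by move=> a b Va _ [/UV0 nVa _]; exact: nVa Va.
exists A, A; do 4!split=> //.
by move=> a b _ Ab [_ Qb]; exact: AQ0 Ab Qb.
Qed.

End SumTopology.

Lemma coarse_arc_endpoints (R : realType) (X : Type) (d : X -> X -> R) (x y : X)
    (g : Defs.arc R X) :
  coarse_arc d x y g -> arc_image g x /\ arc_image g y.
Proof.
move=> [g0 [gx [gy _]]].
by split; [exists 0 | exists g.1]; rewrite /in_dom lexx g0.
Qed.

(* Equicoarseness bounds the parameter length of arcs with close endpoints, and
   hence the distance from any point of such an arc to its endpoint. *)
Lemma equicoarse_arc_image_near (R : realType) (X : Type) (d : X -> X -> R)
    (Ups : set (Defs.arc R X)) (M : R) :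
  equicoarse d Ups -> exists s, forall g x y, Ups g -> coarse_arc d x y g ->
    d x y <= M -> forall z, arc_image g z -> d z y < s.
Proof.
move=> [near_of_close close_of_near].
have [|t short] := close_of_near (`|M| + 1); first by have := normr_ge0 M; lra.
have [|s near] := near_of_close (`|t| + 1); first by have := normr_ge0 t; lra.
exists s => g x y Ug xyg dxy _ [a [ga <-]].
have [g0 [gx [gy _]]] := xyg.
have dom0 : in_dom g 0 by rewrite /in_dom lexx g0.
have domt : in_dom g g.1 by rewrite /in_dom lexx g0.
have g_short : g.1 < t.
  have := short g 0 g.1 Ug dom0 domt; rewrite gx gy sub0r normrN (ger0_norm g0).
  by apply; have := ler_norm M; lra.
rewrite -gy; apply: near => //.
move: ga => /andP [a0 a_le]; rewrite ler0_norm; last by lra.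
by have := ler_norm t; lra.
Qed.

Lemma closure2_inr_eq (R : realType) (X : Type) (d : X -> X -> R)
    (W : topologicalType) (f : set X -> set W) (e : set (X * X)) (p : X + W) (w : W) :
  proper_metric d -> admissible d f -> hausdorff_compactification d f ->
  coarse_Karlsson d f -> eps_d d e -> closure2 d f e (p, inr w) -> p = inr w.
Proof.
move=> dproper fadm [cptT [sep_points _]] [Ups [_ [equi [arcs small]]]] [M eM] clpw.
have [_ [_ [_ dT]]] := dproper.1.
apply: contrapT => pw.
have [U [Q [oU oQ Up Qw u_unif]]] := separating_entourage fadm sep_points cptT pw.
have [S [[x0 [r0 Sr0]] S_small]] := small _ u_unif.
have [s near] := equicoarse_arc_image_near M equi.
have [Q' [oQ' Q'w far]] := inr_separated_from_ball fadm sep_points w x0 (r0 + s) dproper.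
have [x [y [exy [Ux [Qy Q'y]]]]] :=
  clpw U (Q `&` Q') oU (sopen_setI fadm oQ oQ') Up (conj Qw Q'w).
have [g [Ug xyg]] := arcs x y.
have g_avoids_S : arc_image g `&` S = set0.
  apply/disjoints_subset => z gz Sz.
  have := near g x y Ug xyg (eM x y exy) z gz.
  have := Sr0 z Sz; have := far y Q'y; have := dT x0 z y; lra.
have [gx gy] := coarse_arc_endpoints xyg.
exact: S_small g Ug g_avoids_S x y gx gy (conj Ux Qy).
Qed.

Lemma eps_d_swap (R : realType) (X : Type) (d : X -> X -> R) (e : set (X * X)) :
  is_metric d -> eps_d d e -> eps_d d [set xy | e (xy.2, xy.1)].
Proof.
by move=> [_ [_ [dC _]]] [M eM]; exists M => x y /eM; rewrite dC.
Qed.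

Lemma closure2_swap (R : realType) (X : Type) (d : X -> X -> R)
    (W : topologicalType) (f : set X -> set W) (e : set (X * X)) (p q : X + W) :
  closure2 d f e (p, q) -> closure2 d f [set xy | e (xy.2, xy.1)] (q, p).
Proof.
move=> clpq U V oU oV Uq Vp.
by have [x [y [exy [Vx Uy]]]] := clpq V U oV oU Vp Uq; exists y, x.
Qed.

Theorem mainTheorem16 (R : realType) (X : Type) (d : X -> X -> R)
  (W : topologicalType) (f : set X -> set W) :
  proper_metric d -> admissible d f -> hausdorff_compactification d f ->
  coarse_Karlsson d f ->
  forall e : set (X * X), eps_d d e -> perspective d f e.
Proof.
move=> dproper fadm hc hK e eps_e p q clpq not_both_inl.
have at_infinity := closure2_inr_eq dproper fadm hc hK.
case: p q clpq not_both_inl => [x|w1] [y|w2] clpq not_both_inl.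
- by case: not_both_inl; split; eexists.
- by have := at_infinity _ _ _ eps_e clpq.
- by have := at_infinity _ _ _ (eps_d_swap dproper.1 eps_e) (closure2_swap clpq).
- by have [->] := at_infinity _ _ _ eps_e clpq; exists w2.
Qed.
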